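(* Let $D\subset\mathbb N^n$ be finite, not contained in any coordinate hyperplane, $p$ a prime, and $U\in E_{D,p}(r)$ a minimal solution. Then $\mathrm{Im}\,\varphi_U\subset\Sigma_p(D)$.
   Context: $s_p$ = base-$p$ digit sum. $E_{D,p}(r)$ = set of $U=(u_{\mathbf d})\in\{0,\dots,p^r-1\}^D$ with $\sum u_{\mathbf d}\mathbf d\equiv0\pmod{p^r-1}$ and all coordinates of $\sum u_{\mathbf d}\mathbf d$ positive; $s_p(U)=\sum s_p(u_{\mathbf d})$; $\delta_p(D)=\frac1{p-1}\min_{r\ge1}\min_{U\in E_{D,p}(r)}s_p(U)/r$; $U\in E_{D,p}(r)$ is minimal if $s_p(U)=(p-1)r\delta_p(D)$. Shift $\delta_r$: $k\mapsto pk\bmod(p^r-1)$ for $k\le p^r-2$, $p^r-1\mapsto p^r-1$, coordinatewise. $\varphi_U(k)=\frac1{p^r-1}\sum\mathbf d(\delta_r^kU)_{\mathbf d}$ for $k\in\mathbb Z/r\mathbb Z$; $U$ irreducible if $\varphi_U$ injective; $MI_{D,p}$ = set of minimal irreducible elements of all lengths; $\Sigma_p(D)=\bigcup_{U\in MI_{D,p}}\mathrm{Im}\varphi_U$. *)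

From mathcomp Require Import all_boot all_order finmap.
Set Implicit Arguments. Unset Strict Implicit. Unset Printing Implicit Defensive.
Local Open Scope fset_scope.

(* base-p digit sum: sum of the base-p digits (m %/ p^i) %% p of m
   (all digits of index > m vanish since m < p^(m+1) for p >= 2). *)
Definition sp (p m : nat) : nat := \sum_(i < m.+1) (m %/ p ^ i) %% p.

Section Defs.
Variables (n : nat) (D : {fset (n.-tuple nat)}) (p : nat).

Definition vecsum (U : {ffun D -> nat}) (i : 'I_n) : nat :=
  \sum_(d : D) U d * tnth (fsval d) i.

Definition inE (r : nat) (U : {ffun D -> nat}) : Prop :=
  0 < r /\
  (forall d : D, U d < p ^ r) /\
  (forall i : 'I_n, vecsum U i %% (p ^ r - 1) = 0) /\
  (forall i : 'I_n, 0 < vecsum U i).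

Definition spU (U : {ffun D -> nat}) : nat := \sum_(d : D) sp p (U d).

(* U minimal: U \in E(r) and s_p(U)/r attains the minimum over all
   r' >= 1, U' \in E(r') of s_p(U')/r'  (i.e. s_p(U) = (p-1) r delta_p(D)). *)
Definition minimal (r : nat) (U : {ffun D -> nat}) : Prop :=
  inE r U /\
  forall (r' : nat) (U' : {ffun D -> nat}), inE r' U' -> spU U * r' <= spU U' * r.

Definition shift (r k : nat) : nat :=
  if k == p ^ r - 1 then k else (p * k) %% (p ^ r - 1).

Definition shiftU (r : nat) (U : {ffun D -> nat}) : {ffun D -> nat} :=
  [ffun d => shift r (U d)].

(* varphi_U(k) = (1/(p^r-1)) sum_d d (delta_r^k U)_d, for k in Z/rZ
   (represented by 'I_r, since delta_r^r = id); the division is exact on E. *)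
Definition phi (r : nat) (U : {ffun D -> nat}) (k : 'I_r) : n.-tuple nat :=
  [tuple vecsum (iter k (shiftU r) U) i %/ (p ^ r - 1) | i < n].

Definition irreducible (r : nat) (U : {ffun D -> nat}) : Prop :=
  injective (@phi r U).

Definition minimal_irreducible (r : nat) (U : {ffun D -> nat}) : Prop :=
  minimal r U /\ irreducible r U.

Definition inSigma (v : n.-tuple nat) : Prop :=
  exists (r : nat) (U : {ffun D -> nat}) (k : 'I_r),
    minimal_irreducible r U /\ @phi r U k = v.

End Defs.
Arguments phi {n D} p r U k.
Arguments minimal {n D} p r U.
Arguments inSigma {n} D p v.

From Pilot Require Import Defs.
From mathcomp Require Import all_boot all_order finmap zify.
Set Implicit Arguments. Unset Strict Implicit. Unset Printing Implicit Defensive.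

(* Write a solution U of length r as the sequence of its r base-p digit rows,
   most significant first.  The shift delta_r rotates this sequence, and
   phi_U(k) is the base-p value of the row sums of the k-th rotation divided
   by p^r - 1.  If phi_U(k1) = phi_U(k2) with k1 < k2, cutting the rows rotated
   by k1 after a = k2 - k1 rows gives solutions A and B of lengths a and r - a
   with the same quotient vector; their digit sums add up to that of U, so the
   minimality of U makes A and B minimal, and every value of phi_U is a value
   of phi_A or of phi_B. *)

Lemma all_rot (T : Type) (a : pred T) k s : all a (rot k s) = all a s.
Proof. by rewrite /rot all_cat andbC -all_cat cat_take_drop. Qed.

Section Digits.
Variable p : nat.

Fixpoint digval (s : seq nat) : nat :=
  if s is x :: s' then x * p ^ size s' + digval s' else 0.

Lemma digval_cat s t : digval (s ++ t) = digval s * p ^ size t + digval t.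
Proof.
elim: s => [|x s IH] //=; rewrite IH size_cat expnD.
set P := p ^ size s; set Q := p ^ size t; nia.
Qed.

Lemma digval_lt s : all (fun x => x < p) s -> digval s < p ^ size s.
Proof.
elim: s => [|x s IH] /=; first by rewrite expn0.
case/andP=> xp /IH; rewrite expnS; set P := p ^ size s; nia.
Qed.

Hypothesis p_gt0 : 0 < p.

Lemma digval_gt0 s : (0 < digval s) = has (leq 1) s.
Proof.
by elim: s => [|x s IH] //=; rewrite addn_gt0 muln_gt0 expn_gt0 p_gt0 andbT IH.
Qed.

Lemma digval_rot t s : t <= size s ->
  digval (rot t s) + digval (take t s) * (p ^ size s - 1) = p ^ t * digval s.
Proof.
move=> ts; have -> : size s = t + size (drop t s) by rewrite size_drop subnKC.
rewrite /rot -[in RHS](cat_take_drop t s) !digval_cat size_takel // expnD.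
set C := digval _; set E := digval _.
have : 0 < p ^ t * p ^ size (drop t s) by rewrite muln_gt0 !expn_gt0 p_gt0.
nia.
Qed.

Lemma digval_eq_max s : all (fun x => x < p) s ->
  (digval s == p ^ size s - 1) = all (pred1 p.-1) s.
Proof.
elim: s => [|x s IH] /=; first by rewrite expn0.
case/andP=> xp sdig; rewrite -IH //; have := digval_lt sdig; rewrite expnS.
have : 0 < p ^ size s by rewrite expn_gt0 p_gt0.
set P := p ^ size s; set v := digval s => P0 vP.
apply/eqP/andP => [e|[/eqP-> /eqP->]]; last by nia.
have xe : x = p.-1 by nia.
by split; apply/eqP; nia.
Qed.

Lemma digval_rot_div t s y : t <= size s -> digval s = y * (p ^ size s - 1) ->
  digval (rot t s) = (p ^ t * y - digval (take t s)) * (p ^ size s - 1).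
Proof.
move=> ts sy; apply/eqP; rewrite mulnBl -(eqn_add2r (digval (take t s) * (p ^ size s - 1))).
by rewrite subnK -mulnA -sy -digval_rot ?leq_addl.
Qed.

End Digits.

Section BaseDigits.
Variable p : nat.
Hypothesis p_gt1 : 1 < p.
Let p_gt0 : 0 < p := ltnW p_gt1.

Lemma expn_sub1_gt0 m : 0 < m -> 0 < p ^ m - 1.
Proof. by move=> m0; rewrite subn_gt0 -{1}(expn0 p) ltn_exp2l. Qed.

Lemma sp_widen u N : u < N -> sp p u = \sum_(i < N) (u %/ p ^ i) %% p.
Proof.
move=> uN; rewrite /sp -!(big_mkord xpredT (fun i => (u %/ p ^ i) %% p)).
rewrite [RHS](big_cat_nat _ (n := u.+1)) //= [X in _ = _ + X]big1_seq ?addn0 //.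
move=> i /andP[_]; rewrite mem_index_iota => /andP[ui _].
by rewrite divn_small ?mod0n // (leq_trans ui) // ltnW // ltn_expl.
Qed.

Lemma sp_div u : sp p u = u %% p + sp p (u %/ p).
Proof.
rewrite (sp_widen (N := u.+2)) // big_ord_recl /= expn0 divn1.
rewrite (sp_widen (N := u.+1)) ?ltnS ?leq_div //.
by congr (_ + _); apply: eq_bigr => i _; rewrite /bump /= add1n expnS divnMA.
Qed.

Lemma sp_digit m x v : x < p -> v < p ^ m -> sp p (x * p ^ m + v) = x + sp p v.
Proof.
move=> xp; elim: m v => [|m IH] v.
  rewrite expn0 ltnS leqn0 => /eqP->; rewrite muln1 addn0 sp_div divn_small //.
  by rewrite modn_small // (sp_widen (N := 1)) // big_ord1 div0n mod0n.
move=> vm; rewrite sp_div (sp_div v).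
have -> : x * p ^ m.+1 + v = (x * p ^ m) * p + v by rewrite expnSr mulnA.
rewrite modnMDl divnMDl // IH; first by rewrite addnCA.
by rewrite ltn_divLR // -expnSr.
Qed.

Lemma sp_digval s : all (fun x => x < p) s -> sp p (digval p s) = sumn s.
Proof.
elim: s => [|x s IH] /=; first by rewrite (sp_widen (N := 1)) // big_ord1 div0n mod0n.
by case/andP=> xp sdig; rewrite sp_digit ?IH ?digval_lt.
Qed.

Lemma shift_digval s : all (fun x => x < p) s -> 0 < size s ->
  shift p (size s) (digval p s) = digval p (rot 1 s).
Proof.
move=> sdig s0; have rdig : all (fun x => x < p) (rot 1 s) by rewrite all_rot.
have := digval_rot p_gt0 s0; rewrite expn1 /shift => <-.
have rmax : (digval p (rot 1 s) == p ^ size s - 1) = (digval p s == p ^ size s - 1).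
  by rewrite -{1}(size_rot 1 s) !digval_eq_max // all_rot.
case: ifPn => [smax | ne]; first by rewrite (eqP smax); apply/esym/eqP; rewrite rmax.
rewrite addnC modnMDl modn_small // ltn_neqAle rmax ne /=.
by have := digval_lt rdig; rewrite size_rot; lia.
Qed.

Lemma digval_rot_divq t s y : 0 < size s -> t <= size s ->
  digval p s = y * (p ^ size s - 1) ->
  digval p (rot t s) %/ (p ^ size s - 1) = p ^ t * y - digval p (take t s).
Proof. by move=> s0 ts sy; rewrite (digval_rot_div p_gt0 ts sy) mulnK // expn_sub1_gt0. Qed.

Lemma dvdn_digval_rot t s : t <= size s ->
  (p ^ size s - 1) %| digval p s -> (p ^ size s - 1) %| digval p (rot t s).
Proof. by move=> ts /divnK/esym sQ; rewrite (digval_rot_div p_gt0 ts sQ) dvdn_mull. Qed.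

Lemma digval_cut y a s : 0 < a < size s ->
  digval p s = y * (p ^ size s - 1) -> digval p (rot a s) = y * (p ^ size s - 1) ->
  digval p (take a s) = y * (p ^ a - 1) /\ digval p (drop a s) = y * (p ^ (size s - a) - 1).
Proof.
case/andP=> a0 aS; have sA : size (take a s) = a by rewrite size_takel // ltnW.
have eS : p ^ size s = p ^ a * p ^ (size s - a) by rewrite -expnD subnKC // ltnW.
rewrite /rot -{1}(cat_take_drop a s) !digval_cat sA size_drop eS.
have : 1 < p ^ a by rewrite -subn_gt0 expn_sub1_gt0.
have : 1 < p ^ (size s - a) by rewrite -subn_gt0 expn_sub1_gt0 // subn_gt0.
move: (p ^ a) (p ^ (size s - a)) (digval p (take a s)) (digval p (drop a s)).
move=> P Q A B Q1 P1 eAB eBA; split; nia.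
Qed.

Lemma digval_cat_join y A B :
  digval p A = y * (p ^ size A - 1) -> digval p B = y * (p ^ size B - 1) ->
  digval p (A ++ B) = y * (p ^ size (A ++ B) - 1).
Proof.
rewrite digval_cat size_cat expnD => -> ->.
have : 0 < p ^ size A by rewrite expn_gt0 p_gt0.
have : 0 < p ^ size B by rewrite expn_gt0 p_gt0.
set P := p ^ size A; set Q := p ^ size B => Q0 P0.
rewrite -mulnA -mulnDr mulnBl mul1n addnBA // subnK //.
by rewrite leq_pmull.
Qed.

(* By [digval_rot_divq], the quotient of a rotation by t only depends on y and
   on the first t digits, which A ++ B shares with A (and B ++ A with B). *)
Lemma digval_rot_cat y A B k : 0 < size A -> 0 < size B ->
  digval p A = y * (p ^ size A - 1) -> digval p B = y * (p ^ size B - 1) ->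
  k <= size (A ++ B) ->
  digval p (rot k (A ++ B)) %/ (p ^ size (A ++ B) - 1) =
  if k < size A then digval p (rot k A) %/ (p ^ size A - 1)
  else digval p (rot (k - size A) B) %/ (p ^ size B - 1).
Proof.
move=> A0 B0 Ay By kAB; have AB0 : 0 < size (A ++ B) by rewrite size_cat ltn_addr.
have ABy := digval_cat_join Ay By; have BAy := digval_cat_join By Ay.
case: ltnP => kA.
  rewrite (digval_rot_divq AB0 kAB ABy) (digval_rot_divq A0 (ltnW kA) Ay).
  by rewrite takel_cat // ltnW.
have eBA : size (B ++ A) = size (A ++ B) by rewrite !size_cat addnC.
have kB : k - size A <= size B by move: kAB; rewrite size_cat; lia.
have kBA : k - size A <= size (B ++ A) by rewrite size_cat (leq_trans kB) ?leq_addr.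
rewrite -{1}(subnK kA) rotD ?subnK // rot_size_cat -eBA.
by rewrite (digval_rot_divq _ kBA BAy) ?eBA // takel_cat // (digval_rot_divq B0 kB By).
Qed.

End BaseDigits.

Lemma rot_rot_lt (T : Type) (s : seq T) j k : j <= size s -> k < size s ->
  exists2 t, t < size s & rot k s = rot t (rot j s).
Proof.
move=> js ks; case: (leqP j k) => jk.
  exists (k - j); first exact: leq_ltn_trans (leq_subr _ _) ks.
  by rewrite -rotD subnK // ltnW.
exists (k + (size s - j)); first lia.
rewrite rotD ?size_rot; last lia.
by rewrite -[rot (size s - j) _]rotD subnK // rot_size.
Qed.

Lemma not_injective_lt (T : eqType) r (f : 'I_r -> T) :
  ~~ injectiveb f -> exists k1 k2 : 'I_r, k1 < k2 /\ f k1 = f k2.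
Proof.
case/injectivePn => k1 [k2 k12 f12]; case: (ltngtP k1 k2) => [lt | gt | /val_inj e].
- by exists k1, k2.
- by exists k2, k1.
- by rewrite e eqxx in k12.
Qed.

Section DigitRows.
Variables (n : nat) (D : {fset (n.-tuple nat)}) (p : nat).
Hypothesis p_gt1 : 1 < p.
Let p_gt0 : 0 < p := ltnW p_gt1.

Implicit Types (L M A B : seq {ffun D -> nat}) (x U V W : {ffun D -> nat}).

Definition digit_rows L : bool := all (fun x => [forall d : D, x d < p]) L.

Definition from_digit_rows L : {ffun D -> nat} := [ffun d => digval p [seq x d | x <- L]].

Definition vecsum_rows L (i : 'I_n) : seq nat := [seq vecsum x i | x <- L].

Definition phi_rows L : n.-tuple nat :=
  [tuple digval p (vecsum_rows L i) %/ (p ^ size L - 1) | i < n].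

Lemma digit_rows_col L (d : D) : digit_rows L -> all (fun m => m < p) [seq x d | x <- L].
Proof. by move=> /allP Ldig; rewrite all_map; apply/allP => x /Ldig /forallP /(_ d). Qed.

Lemma digit_rows_rot k L : digit_rows L -> digit_rows (rot k L).
Proof. by rewrite /digit_rows all_rot. Qed.

Lemma vecsum_from_digit_rows L i : vecsum (from_digit_rows L) i = digval p (vecsum_rows L i).
Proof.
rewrite /vecsum; elim: L => [|x L IH] /=; first by apply: big1 => d _; rewrite ffunE.
rewrite size_map -IH big_distrl -big_split /=; apply: eq_bigr => d _.
by rewrite !ffunE /= size_map mulnDl mulnAC.
Qed.

Lemma spU_from_digit_rows L : digit_rows L ->
  spU p (from_digit_rows L) = \sum_(x <- L) \sum_(d : D) x d.
Proof.
move=> Ldig; rewrite /spU exchange_big /=; apply: eq_bigr => d _.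
by rewrite ffunE sp_digval ?sumnE ?big_map // digit_rows_col.
Qed.

Lemma shiftU_from_digit_rows L : digit_rows L -> 0 < size L ->
  shiftU p (size L) (from_digit_rows L) = from_digit_rows (rot 1 L).
Proof.
move=> Ldig L0; apply/ffunP => d; rewrite !ffunE map_rot.
rewrite -(size_map (fun x => x d)) shift_digval ?size_map //.
exact: digit_rows_col.
Qed.

Lemma iter_shiftU_from_digit_rows k L : digit_rows L -> k <= size L ->
  iter k (shiftU p (size L)) (from_digit_rows L) = from_digit_rows (rot k L).
Proof.
move=> Ldig; elim: k => [|k IH] kL; first by rewrite rot0.
rewrite iterS IH 1?ltnW // -(size_rot k L) shiftU_from_digit_rows ?digit_rows_rot //.
  by rewrite -rotD ?add1n.
by rewrite size_rot (leq_ltn_trans _ kL).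
Qed.

Lemma phi_from_digit_rows r L (k : 'I_r) : digit_rows L -> size L = r ->
  phi p r (from_digit_rows L) k = phi_rows (rot k L).
Proof.
move=> Ldig Lr; subst r; apply: eq_from_tnth => i; rewrite !tnth_mktuple size_rot.
by rewrite iter_shiftU_from_digit_rows ?vecsum_from_digit_rows // ltnW.
Qed.

Lemma digit_rows_exist r U : (forall d, U d < p ^ r) ->
  exists L, [/\ size L = r, digit_rows L & U = from_digit_rows L].
Proof.
elim: r U => [|r IH] U Ubnd.
  exists [::]; split=> //; apply/ffunP => d; rewrite ffunE /=.
  by apply/eqP; rewrite -leqn0 -ltnS -(expn0 p) Ubnd.
have [|L [Lr Ldig UL]] := IH [ffun d => U d %% p ^ r].
  by move=> d; rewrite ffunE ltn_pmod // expn_gt0 p_gt0.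
exists ([ffun d => U d %/ p ^ r] :: L); split; first by rewrite /= Lr.
  apply/andP; split=> //; apply/forallP => d.
  by rewrite ffunE ltn_divLR ?expn_gt0 ?p_gt0 // -expnS Ubnd.
apply/ffunP => d; have := congr1 (fun V => V d) UL.
by rewrite /= !ffunE /= size_map Lr => <-; rewrite ffunE -divn_eq.
Qed.

Lemma inE_from_digit_rowsP L : digit_rows L ->
  Defs.inE p (size L) (from_digit_rows L) <->
  [/\ 0 < size L, forall i, (p ^ size L - 1) %| digval p (vecsum_rows L i)
    & forall i, 0 < digval p (vecsum_rows L i)].
Proof.
move=> Ldig; split=> [[L0 [_ [Ldvd Lpos]]] | [L0 Ldvd Lpos]].
  by split=> // i; rewrite -vecsum_from_digit_rows ?Lpos // /dvdn Ldvd.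
split=> //; split.
  by move=> d; rewrite ffunE -(size_map (fun x => x d)) digval_lt ?digit_rows_col.
by split=> i; rewrite vecsum_from_digit_rows ?Lpos //; apply/eqP; apply: Ldvd.
Qed.

Lemma inE_rot k L : digit_rows L -> k <= size L ->
  Defs.inE p (size L) (from_digit_rows L) -> Defs.inE p (size L) (from_digit_rows (rot k L)).
Proof.
move=> Ldig kL /(inE_from_digit_rowsP Ldig) [L0 Ldvd Lpos].
rewrite -(size_rot k L); apply/inE_from_digit_rowsP; first exact: digit_rows_rot.
rewrite size_rot; split=> // i; rewrite /vecsum_rows map_rot.
  have := dvdn_digval_rot p_gt1 (t := k) (s := vecsum_rows L i).
  by rewrite size_map => /(_ kL (Ldvd i)).
by rewrite (digval_gt0 p_gt0) has_rot -(digval_gt0 p_gt0) Lpos.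
Qed.

Lemma spU_rot k L : digit_rows L ->
  spU p (from_digit_rows (rot k L)) = spU p (from_digit_rows L).
Proof.
by move=> Ldig; rewrite !spU_from_digit_rows ?digit_rows_rot //; apply: perm_big; rewrite perm_rot.
Qed.

Lemma minimal_rot k L : digit_rows L -> k <= size L ->
  minimal p (size L) (from_digit_rows L) -> minimal p (size L) (from_digit_rows (rot k L)).
Proof.
move=> Ldig kL [Lin Lmin]; split=> [|r' U' /Lmin]; first exact: inE_rot.
by rewrite spU_rot.
Qed.

Lemma minimal_summand r U a V b W : minimal p r U ->
  Defs.inE p a V -> Defs.inE p b W -> spU p V + spU p W = spU p U -> a + b = r ->
  minimal p a V.
Proof.
move=> [[r0 _] Umin] Vin Win sVW ab; split=> // r' U' /Umin.
have := Umin a V Vin; have := Umin b W Win; rewrite -sVW -ab.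
move: (spU p V) (spU p W) (spU p U') => sV sW s' hW hV h'.
have e : sV * (a + b) = (sV + sW) * a by nia.
rewrite -(leq_pmul2r r0) -ab -mulnA mulnCA e mulnCA.
have := leq_mul (leqnn a) h'; nia.
Qed.

Definition periodic_rows (y : n.-tuple nat) L :=
  forall i, digval p (vecsum_rows L i) = tnth y i * (p ^ size L - 1).

Lemma phi_rows_periodic L :
  (forall i, (p ^ size L - 1) %| digval p (vecsum_rows L i)) -> periodic_rows (phi_rows L) L.
Proof. by move=> Ldvd i; rewrite tnth_mktuple divnK. Qed.

Lemma inE_periodic y L : digit_rows L -> 0 < size L -> (forall i, 0 < tnth y i) ->
  periodic_rows y L -> Defs.inE p (size L) (from_digit_rows L).
Proof.
move=> Ldig L0 ypos yL; apply/inE_from_digit_rowsP => //.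
by split=> // i; rewrite yL ?dvdn_mull // muln_gt0 ypos expn_sub1_gt0.
Qed.

Lemma periodic_rows_cut y a M : 0 < a < size M ->
  periodic_rows y M -> periodic_rows y (rot a M) ->
  periodic_rows y (take a M) /\ periodic_rows y (drop a M).
Proof.
move=> aM yM yR; have sA : size (take a M) = a by rewrite size_takel // ltnW; case/andP: aM.
have cut i : digval p (vecsum_rows (take a M) i) = tnth y i * (p ^ a - 1) /\
             digval p (vecsum_rows (drop a M) i) = tnth y i * (p ^ (size M - a) - 1).
  rewrite /vecsum_rows map_take map_drop -(size_map (fun x => vecsum x i) M).
  apply: (digval_cut p_gt1); rewrite ?size_map ?yM // -map_rot.
  by have := yR i; rewrite size_rot.
by split=> i; rewrite ?size_drop ?sA; case: (cut i).
Qed.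

Lemma phi_rows_rot_cat y A B k : 0 < size A -> 0 < size B ->
  periodic_rows y A -> periodic_rows y B -> k <= size (A ++ B) ->
  phi_rows (rot k (A ++ B)) =
  if k < size A then phi_rows (rot k A) else phi_rows (rot (k - size A) B).
Proof.
move=> A0 B0 yA yB kAB.
have key i : digval p (vecsum_rows (rot k (A ++ B)) i) %/ (p ^ size (A ++ B) - 1) =
    if k < size A then digval p (vecsum_rows (rot k A) i) %/ (p ^ size A - 1)
    else digval p (vecsum_rows (rot (k - size A) B) i) %/ (p ^ size B - 1).
  have := digval_rot_cat p_gt1 (y := tnth y i)
    (A := vecsum_rows A i) (B := vecsum_rows B i) (k := k).
  rewrite -map_cat !size_map /vecsum_rows !map_rot; apply=> //; [exact: yA | exact: yB].
case: ltnP => kA; apply: eq_from_tnth => i; rewrite !tnth_mktuple !size_rot key.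
  by rewrite kA.
by rewrite ltnNge kA.
Qed.

Lemma minimal_cut a M : digit_rows M -> minimal p (size M) (from_digit_rows M) ->
  0 < a < size M -> phi_rows (rot a M) = phi_rows M ->
  [/\ minimal p a (from_digit_rows (take a M)),
      minimal p (size M - a) (from_digit_rows (drop a M))
    & forall k, k < size M ->
        (exists t : 'I_a, phi_rows (rot k M) = phi p a (from_digit_rows (take a M)) t) \/
        (exists t : 'I_(size M - a),
           phi_rows (rot k M) = phi p (size M - a) (from_digit_rows (drop a M)) t)].
Proof.
move=> Mdig Mmin aM phiR; have [Min _] := Mmin; case/andP: (aM) => a0 aM'.
have [M0 Mdvd Mpos] := (inE_from_digit_rowsP Mdig).1 Min.
have Rin : Defs.inE p (size (rot a M)) (from_digit_rows (rot a M)).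
  by rewrite size_rot; apply: inE_rot => //; apply: ltnW.
have [_ Rdvd _] := (inE_from_digit_rowsP (digit_rows_rot a Mdig)).1 Rin.
set y := phi_rows M; have yM : periodic_rows y M := phi_rows_periodic Mdvd.
have yR : periodic_rows y (rot a M) by rewrite /y -phiR; apply: phi_rows_periodic.
have [yA yB] := periodic_rows_cut aM yM yR.
have ypos i : 0 < tnth y i by have := Mpos i; rewrite yM muln_gt0 => /andP[].
have sA : size (take a M) = a by rewrite size_takel // ltnW.
have sB : size (drop a M) = size M - a by rewrite size_drop.
have A0 : 0 < size (take a M) by rewrite sA.
have B0 : 0 < size (drop a M) by rewrite sB subn_gt0.
have /andP[Adig Bdig] : digit_rows (take a M) && digit_rows (drop a M).
  by rewrite -all_cat cat_take_drop.
have Ain := inE_periodic Adig A0 ypos yA; have Bin := inE_periodic Bdig B0 ypos yB.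
rewrite sA in Ain; rewrite sB in Bin.
have sAB : spU p (from_digit_rows (take a M)) + spU p (from_digit_rows (drop a M)) =
           spU p (from_digit_rows M).
  by rewrite !spU_from_digit_rows // -big_cat cat_take_drop.
split.
- by apply: minimal_summand Mmin Ain Bin sAB _; rewrite subnKC // ltnW.
- by apply: minimal_summand Mmin Bin Ain _ _; rewrite addnC // subnKC // ltnW.
move=> k kM; have := phi_rows_rot_cat A0 B0 yA yB (k := k).
rewrite cat_take_drop sA => /(_ (ltnW kM)) ->; case: ltnP => ka; [left | right].
  by exists (Ordinal ka); rewrite phi_from_digit_rows.
have kaB : k - a < size M - a by rewrite ltn_sub2r.
by exists (Ordinal kaB); rewrite phi_from_digit_rows.
Qed.

Lemma minimal_phi_inSigma r U : minimal p r U -> forall k : 'I_r, inSigma D p (phi p r U k).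
Proof.
elim/ltn_ind: r U => r IH U Umin k.
have [Uinj | /not_injective_lt [k1 [k2 [k12 phi12]]]] := boolP (injectiveb (phi p r U)).
  by exists r, U, k; do 2!split=> //; apply/injectiveP.
have [_ [Ubnd _]] := Umin.1.
have [L [Lr Ldig UL]] := digit_rows_exist Ubnd; subst r U.
rewrite !phi_from_digit_rows // in phi12 *.
set a := k2 - k1; set M := rot k1 L.
have Mmin : minimal p (size M) (from_digit_rows M).
  by rewrite size_rot; apply: minimal_rot => //; apply: ltnW.
have aM : 0 < a < size M by rewrite subn_gt0 k12 size_rot (leq_ltn_trans (leq_subr _ _)).
have phiM : phi_rows (rot a M) = phi_rows M.
  by rewrite -rotD ?subnK ?size_rot 1?ltnW.
have [Amin Bmin phiAB] := minimal_cut (digit_rows_rot k1 Ldig) Mmin aM phiM.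
have [t tL ->] := rot_rot_lt (ltnW (ltn_ord k1)) (ltn_ord k).
have aL : a < size L by move: aM; rewrite size_rot => /andP[].
have bL : size M - a < size L by move: aM; rewrite size_rot; lia.
have [|[t' ->]|[t' ->]] := phiAB t; first by rewrite size_rot.
  exact: IH aL _ Amin t'.
exact: IH bL _ Bmin t'.
Qed.

End DigitRows.

Unset Implicit Arguments.
Local Open Scope fset_scope.

Theorem lemma2p11 (n : nat) (D : {fset (n.-tuple nat)}) (p r : nat)
  (U : {ffun D -> nat}) :
  (forall i : 'I_n, exists2 d, d \in D & tnth d i != 0) ->
  prime p ->
  minimal p r U ->
  forall k : 'I_r, inSigma D p (phi p r U k).
Proof. by move=> _ /prime_gt1 p_gt1; apply: minimal_phi_inSigma. Qed.
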